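(* Let $W$ be a graphon on a probability space $J=(\Omega,\mathcal A,\mu)$ and let $(\nu_x)_{x\in J}$, $\nu_x=W(x,\cdot)\,d\mu$, be the associated graphop. Then: every graphon automorphism of $W$ is a graphop automorphism of $(\nu_x)$; a graphop automorphism $\varphi$ of $(\nu_x)$ is a graphon automorphism of $W$ if and only if it preserves $\mu$; in particular, the graphon-induced symmetries are exactly the graphop-induced symmetries that are isometries of $L^1(J)$.
   Context: A graphon is a symmetric measurable $W:\Omega\times\Omega\to[0,1]$. A graphon automorphism is an invertible measure preserving $\varphi:J\to J$ with $W(\varphi(x),\varphi(y))=W(x,y)$ for every $x$ and almost every $y$. A graphop automorphism of a graphop with fiber measures $(\nu_x)$ is a measurable bijection $\varphi$ with $\varphi\#\nu_x=\nu_{\varphi(x)}$ for every $x$. The graphon-induced (resp. graphop-induced) symmetry associated to a graphon (resp. graphop) automorphism $\varphi$ is the map $\varphi^*:L^1(J)\to L^1(J)$, $u\mapsto u\circ\varphi$. *)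

From HB Require Import structures.
From mathcomp Require Import all_boot all_order all_algebra.
From mathcomp Require Import all_classical all_reals all_analysis.
Set Implicit Arguments. Unset Strict Implicit. Unset Printing Implicit Defensive.
Import Order.TTheory GRing.Theory Num.Theory.
Local Open Scope classical_set_scope.
Local Open Scope ring_scope.

Section Graphon.
Context (d : measure_display) (T : measurableType d) (R : realType)
        (mu : probability T R).

Definition is_graphon (W : T -> T -> R) : Prop :=
  [/\ measurable_fun setT (fun p : T * T => W p.1 p.2),
      (forall x y, W x y = W y x) &
      (forall x y, 0 <= W x y <= 1)].

Definition graphop_nu (W : T -> T -> R) (x : T) (A : set T) : \bar R :=
  (\int[mu]_(y in A) (W x y)%:E)%E.

Definition measurable_bijection (phi : T -> T) : Prop :=
  exists psi : T -> T,
    [/\ measurable_fun setT phi, measurable_fun setT psi,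
        cancel phi psi & cancel psi phi].

Definition measure_preserving (phi : T -> T) : Prop :=
  forall A, measurable A -> mu (phi @^-1` A) = mu A.

Definition graphon_automorphism (W : T -> T -> R) (phi : T -> T) : Prop :=
  [/\ measurable_bijection phi, measure_preserving phi &
      forall x, {ae mu, forall y, W (phi x) (phi y) = W x y}].

Definition graphop_automorphism (W : T -> T -> R) (phi : T -> T) : Prop :=
  measurable_bijection phi /\
  forall x A, measurable A ->
    graphop_nu W x (phi @^-1` A) = graphop_nu W (phi x) A.

(* elements of L^1(J) are represented by integrable functions T -> R *)
Definition L1fun (u : T -> R) : Prop := mu.-integrable setT (EFin \o u).

Definition L1_isometry (phi : T -> T) : Prop :=
  forall u, L1fun u ->
    L1fun (u \o phi) /\
    (\int[mu]_x `|u (phi x)|%:E = \int[mu]_x `|u x|%:E)%E.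

(* phi^* and psi^* coincide as maps on L^1(J) (equality a.e. of images) *)
Definition same_symmetry (phi psi : T -> T) : Prop :=
  forall u, L1fun u -> {ae mu, forall x, u (phi x) = u (psi x)}.

End Graphon.

From HB Require Import structures.
From mathcomp Require Import all_boot all_order all_algebra.
From mathcomp Require Import all_classical all_reals all_analysis.
From mathcomp Require Import lebesgue_measure measurable_realfun.
Set Implicit Arguments. Unset Strict Implicit. Unset Printing Implicit Defensive.
Import Order.TTheory GRing.Theory Num.Theory.
Local Open Scope classical_set_scope.
Local Open Scope ring_scope.

(* If phi preserves mu then nu_(phi x)(A) = \int_(phi^-1 A) W(phi x, phi y) dmu(y),
   while nu_x(phi^-1 A) = \int_(phi^-1 A) W(x, y) dmu(y).  So W(phi x, phi .) = W(x, .)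
   a.e. gives phi # nu_x = nu_(phi x); conversely phi # nu_x = nu_(phi x) makes the
   integrals of the bounded functions W(x, .) and W(phi x, phi .) agree on every
   measurable set, hence makes them equal a.e.  Testing u |-> u \o phi on
   indicator functions shows it is an L^1 isometry iff phi preserves mu. *)

Section MeasurePreserving.
Context (d : measure_display) (T : measurableType d) (R : realType)
  (mu : probability T R).
Implicit Types (phi : T -> T) (A D : set T).

Lemma measurable_preimageT phi A :
  measurable_fun setT phi -> measurable A -> measurable (phi @^-1` A).
Proof. by move=> mphi mA; rewrite -[phi @^-1` A]setTI; exact: mphi. Qed.

Lemma measure_preserving_ge0_integral phi D (f : T -> \bar R) :
  measurable_fun setT phi -> measure_preserving mu phi ->
  measurable D -> measurable_fun D f ->
  (forall y, D y -> 0 <= f y)%E ->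
  (\int[mu]_(x in phi @^-1` D) f (phi x) = \int[mu]_(y in D) f y)%E.
Proof.
move=> mphi mp mD mf f0.
rewrite -(ge0_integral_pushforward mphi) //; last by move=> y /[!inE]; exact: f0.
by apply: eq_measure_integral => A mA _; exact: mp.
Qed.

Lemma measure_preserving_L1_isometry phi :
  measurable_fun setT phi -> measure_preserving mu phi -> L1_isometry mu phi.
Proof.
move=> mphi mp u /integrableP[mu_u finu].
have mnu : measurable_fun setT (fun x => `|u x|%:E).
  by apply/measurable_EFinP; apply: measurableT_comp => //; exact/measurable_EFinP.
have norm_phi : (\int[mu]_x `|u (phi x)|%:E = \int[mu]_x `|u x|%:E)%E.
  rewrite -(measure_preserving_ge0_integral mphi mp measurableT mnu).
    by rewrite preimage_setT.
  by move=> y _; rewrite lee_fin.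
split=> //; apply/integrableP; split; first exact: measurableT_comp mu_u mphi.
by rewrite [X in (X < _)%E]norm_phi.
Qed.

Lemma L1_isometry_measure_preserving phi :
  measurable_fun setT phi -> L1_isometry mu phi -> measure_preserving mu phi.
Proof.
move=> mphi iso A mA.
have norm_indic_phi : (fun x => `|(\1_A : T -> R) (phi x)|%:E) =
    (fun x => (\1_(phi @^-1` A) x)%:E).
  by apply/funext => x; rewrite ger0_norm.
have norm_indic : (fun x => `|(\1_A : T -> R) x|%:E) = (fun x => (\1_A x)%:E).
  by apply/funext => x; rewrite ger0_norm.
have [_] := iso _ (integrable_indic mu mA).
rewrite norm_indic_phi norm_indic !integral_indic ?setIT //.
exact: measurable_preimageT.
Qed.

End MeasurePreserving.

Section Graphon.
Context (d : measure_display) (T : measurableType d) (R : realType)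
  (mu : probability T R) (W : T -> T -> R).
Hypothesis graphonW : is_graphon W.
Implicit Types (phi : T -> T) (A : set T).

Lemma graphon_ge0 x y : 0 <= W x y.
Proof. by case: graphonW => _ _ /(_ x y) /andP[]. Qed.

Lemma measurable_graphon_section x : measurable_fun setT (W x).
Proof. by case: graphonW => mW _ _; exact: measurableT_comp mW (pair1_measurable x). Qed.

Lemma integrable_graphon_section x : mu.-integrable setT (EFin \o W x).
Proof.
apply: measurable_bounded_integrable => //.
- exact: (le_lt_trans (probability_le1 mu measurableT)) (ltry _).
- exact: measurable_graphon_section.
exists 1; split=> // M M1 y _ /=; rewrite ger0_norm ?graphon_ge0 //.
case: graphonW => _ _ /(_ x y) /andP[_ W1].
exact: le_trans W1 (ltW M1).
Qed.

Lemma graphop_nu_preimage phi x A :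
  measurable_fun setT phi -> measure_preserving mu phi -> measurable A ->
  graphop_nu mu W (phi x) A =
    (\int[mu]_(y in phi @^-1` A) (W (phi x) (phi y))%:E)%E.
Proof.
move=> mphi mp mA; rewrite /graphop_nu.
rewrite (measure_preserving_ge0_integral (f := fun y => (W (phi x) y)%:E) mphi) //.
- by apply: measurable_funTS; apply/measurable_EFinP; exact: measurable_graphon_section.
- by move=> y _; rewrite lee_fin graphon_ge0.
Qed.

Lemma graphon_automorphism_graphop phi :
  graphon_automorphism mu W phi -> graphop_automorphism mu W phi.
Proof.
move=> [bijphi mp Wphi]; split=> // x A mA.
have [_ [mphi _ _ _]] := bijphi.
rewrite graphop_nu_preimage //; apply: ae_eq_integral.
- exact: measurable_preimageT.
- by apply: measurable_funTS; apply/measurable_EFinP; exact: measurable_graphon_section.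
- apply: measurable_funTS; apply/measurable_EFinP.
  exact: measurableT_comp (measurable_graphon_section _) mphi.
- by apply: filterS (Wphi x) => y /= ->.
Qed.

Lemma graphop_automorphism_graphon phi :
  graphop_automorphism mu W phi -> measure_preserving mu phi ->
  graphon_automorphism mu W phi.
Proof.
move=> [bijphi nuphi] mp; split=> // x.
have [psi [mphi mpsi phiK _]] := bijphi.
have int_eq E : E `<=` setT -> measurable E ->
    (\int[mu]_(y in E) (EFin \o W x) y =
     \int[mu]_(y in E) (W (phi x) (phi y))%:E)%E.
  move=> _ mE; have mpsiE := measurable_preimageT mpsi mE.
  have phipsiE : phi @^-1` (psi @^-1` E) = E.
    by apply/seteqP; split=> y /=; rewrite phiK.
  by have := nuphi x _ mpsiE; rewrite graphop_nu_preimage // phipsiE.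
have mWphi : measurable_fun setT (fun y => (W (phi x) (phi y))%:E).
  by apply/measurable_EFinP; exact: measurableT_comp (measurable_graphon_section _) mphi.
have := integral_ae_eq measurableT (integrable_graphon_section x) mWphi int_eq.
by apply: filterS => y /(_ I) [->].
Qed.

End Graphon.

Theorem lemma8p3 (d : measure_display) (T : measurableType d) (R : realType)
    (mu : probability T R) (W : T -> T -> R) :
  is_graphon W ->
  [/\ (forall phi, graphon_automorphism mu W phi -> graphop_automorphism mu W phi),
      (forall phi, graphop_automorphism mu W phi ->
         (graphon_automorphism mu W phi <-> measure_preserving mu phi)) &
      ((forall phi, graphon_automorphism mu W phi ->
          exists psi, [/\ graphop_automorphism mu W psi, L1_isometry mu psi &
                          same_symmetry mu phi psi]) /\
       (forall phi, graphop_automorphism mu W phi -> L1_isometry mu phi ->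
          exists psi, graphon_automorphism mu W psi /\ same_symmetry mu phi psi))].
Proof.
move=> graphonW.
have same_refl phi : same_symmetry mu phi phi by move=> u _; exact: aeW.
split.
- exact: graphon_automorphism_graphop.
- move=> phi autphi; split=> [[] //|]; exact: graphop_automorphism_graphon.
split=> phi.
- move=> autphi; exists phi; split=> //; first exact: graphon_automorphism_graphop.
  case: autphi => [[_ [mphi _ _ _]] mp _].
  exact: measure_preserving_L1_isometry.
- move=> autphi isophi; exists phi; split=> //.
  apply: graphop_automorphism_graphon => //.
  case: autphi => [[_ [mphi _ _ _]] _].
  exact: L1_isometry_measure_preserving.
Qed.
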